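(* Let $\mathcal{H}$ and $\mathcal{K}$ be finite-dimensional complex Hilbert spaces and let $\Psi,\Xi: B(\mathcal{H})\to B(\mathcal{K})$ be Hermitian-preserving trace-preserving linear maps. Suppose there are finite, pairwise disjoint index sets $K,J,\mathcal{I},L$ with $|K|=|L|=|\mathcal{I}|=|J|$ and linear operators $A_k,B_j,C_i,D_l:\mathcal{H}\to\mathcal{K}$ ($k\in K$, $j\in J$, $i\in\mathcal{I}$, $l\in L$) such that for all $X\in B(\mathcal{H})$ $$\Psi(X)=\sum_{k\in K}A_kXA_k^\dagger-\sum_{j\in J}B_jXB_j^\dagger,\qquad \Xi(X)=\sum_{i\in\mathcal{I}}C_iXC_i^\dagger-\sum_{l\in L}D_lXD_l^\dagger.$$ Then $\Psi=\Xi$ if and only if there exists a unitary matrix $U$ with rows indexed by $K\cup L$ and columns indexed by $\mathcal{I}\cup J$ such that $$A_k=\sum_{i\in\mathcal{I}}U(k,i)C_i+\sum_{j\in J}U(k,j)B_j\ \ (k\in K),\qquad D_l=\sum_{i\in\mathcal{I}}U(l,i)C_i+\sum_{j\in J}U(l,j)B_j\ \ (l\in L).$$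
   Context: $B(\mathcal{H})$ denotes all linear operators on $\mathcal{H}$. A map is Hermitian-preserving if $\Psi(X^\dagger)=\Psi(X)^\dagger$ and trace-preserving if $\operatorname{Tr}\Psi(X)=\operatorname{Tr}X$. *)

From HB Require Import structures.
From mathcomp Require Import all_boot all_order all_algebra.
From mathcomp Require Import reals complex.
Set Implicit Arguments. Unset Strict Implicit. Unset Printing Implicit Defensive.
Import Order.TTheory GRing.Theory Num.Theory.
Local Open Scope ring_scope.

Definition adjmx (C : numClosedFieldType) (m n : nat) (A : 'M[C]_(m, n)) : 'M[C]_(n, m) :=
  (map_mx Num.conj A)^T.

Definition hermitian_preserving (C : numClosedFieldType) (m n : nat)
  (Psi : 'M[C]_m -> 'M[C]_n) : Prop :=
  forall X : 'M[C]_m, Psi (adjmx X) = adjmx (Psi X).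

Definition trace_preserving (C : numClosedFieldType) (m n : nat)
  (Psi : 'M[C]_m -> 'M[C]_n) : Prop :=
  forall X : 'M[C]_m, \tr (Psi X) = \tr X.

Definition unitary_mx (C : numClosedFieldType) (p : nat) (U : 'M[C]_p) : Prop :=
  U *m adjmx U = 1%:M /\ adjmx U *m U = 1%:M.

(* Psi = Xi says exactly that the completely positive maps with Kraus
   families (A, D) and (C, B) coincide.  Flattening each Kraus operator into a
   column of a matrix, the Kraus map is determined by the Gram matrix
   Y Y^* of that matrix (the Choi matrix up to reshuffling), and
   X X^* = Y Y^* holds iff X = Y V for a unitary V: through the pseudo-inverse
   of Y, V maps an orthonormal basis of the row space of Y to one of the row
   space of X, and the orthogonal complements onto each other.  The
   transpose of V is the mixing matrix U. *)

From HB Require Import structures.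
From mathcomp Require Import all_boot all_order all_algebra.
From mathcomp Require Import reals complex.
From mathcomp Require Import sesquilinear spectral.
From mathcomp Require boolp.
Set Implicit Arguments.
Unset Strict Implicit.
Unset Printing Implicit Defensive.
Import GRing.Theory Num.Theory Num.Def.
Local Open Scope ring_scope.
Local Open Scope sesquilinear_scope.

Local Notation "B ^!" :=
  (orthomx conjC (mx_of_hermitian (hermitian1mx _)) B) : matrix_set_scope.

Section GramUnitary.
Variable C : numClosedFieldType.

Lemma adjmxE m n (A : 'M[C]_(m, n)) : adjmx A = A^t*.
Proof. by rewrite /adjmx map_trmx. Qed.

Lemma unitary_mxP n {U : 'M[C]_n} : unitary_mx U <-> U \is unitarymx.
Proof.
rewrite /unitary_mx adjmxE; split=> [[/unitarymxP] //| /unitarymxP UU].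
by split=> //; apply: mulmx1C.
Qed.

Lemma gram_eq0 p r (M : 'M[C]_(p, r)) : M *m M^t* = 0 -> M = 0.
Proof.
move=> MM0; apply/matrixP => i j; rewrite mxE.
have /eqP := congr1 (fun A : 'M_p => A i i) MM0; rewrite !mxE.
rewrite psumr_eq0; last by move=> k _; rewrite !mxE mul_conjC_ge0.
move=> /allP /(_ j (mem_index_enum _)) /implyP /(_ isT).
by rewrite !mxE mul_conjC_eq0 => /eqP.
Qed.

Section SameGram.
Variables p r : nat.
Variables X Y : 'M[C]_(p, r).
Hypothesis XY : X *m X^t* = Y *m Y^t*.

Lemma gram_ker q (d : 'M[C]_(q, p)) : d *m Y = 0 -> d *m X = 0.
Proof.
move=> dY; apply: gram_eq0.
rewrite trmx_mul map_mxM mulmxA -[d *m X *m _]mulmxA XY.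
by rewrite mulmxA dY !mul0mx.
Qed.

Lemma gram_pinv_factor : Y *m (pinvmx Y *m X) = X.
Proof.
apply/eqP; rewrite -subr_eq0 mulmxA -{2}[X]mul1mx -mulmxBl.
apply/eqP; apply: gram_ker.
by rewrite mulmxBl mulmxKpV // mul1mx subrr.
Qed.

End SameGram.

Lemma gram_rank p r (X Y : 'M[C]_(p, r)) : X *m X^t* = Y *m Y^t* ->
  \rank X = \rank Y.
Proof.
move=> XY; apply/eqP; rewrite eqn_leq.
rewrite -{1}(gram_pinv_factor XY) mxrankM_maxl.
by rewrite -{1}(gram_pinv_factor (esym XY)) mxrankM_maxl.
Qed.

Lemma unitarymx_trC m n (M : 'M[C]_(m, n)) :
  M \is unitarymx -> m = n -> M^t* \is unitarymx.
Proof.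
move=> Mu mn; apply/unitarymxP; rewrite trmxCK.
by have := mulmxKtV 1%:M Mu mn; rewrite mul1mx.
Qed.

Lemma col_mx_unitary k1 k2 r (a : 'M[C]_(k1, r)) (b : 'M[C]_(k2, r)) :
  a \is unitarymx -> b \is unitarymx -> a *m b^t* = 0 ->
  col_mx a b \is unitarymx.
Proof.
move=> /unitarymxP au /unitarymxP bu ab; apply/unitarymxP.
rewrite tr_col_mx map_row_mx mul_col_row au bu ab.
have -> : b *m a^t* = 0.
  by rewrite -[b]trmxCK -map_mxM -trmx_mul ab trmx0 map_mx0.
by rewrite -scalar_mx_block.
Qed.

Lemma orthonormal_basis q r (A : 'M[C]_(q, r)) d : \rank A = d ->
  exists2 b : 'M[C]_(d, r), b \is unitarymx & (b <= A)%MS.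
Proof.
move=> <-; exists (schmidt (row_base A)).
  by apply: schmidt_unitarymx; rewrite rank_leq_col.
by rewrite eqmx_schmidt_free ?row_base_free // eq_row_base.
Qed.

Lemma unitarymx_proj p q r (Y : 'M[C]_(p, r)) (e : 'M[C]_(q, r)) :
  e \is unitarymx -> (Y <= e)%MS -> Y *m e^t* *m e = Y.
Proof. by move=> eu /submxP[Z ->]; rewrite mulmxtVK. Qed.

Lemma gram_mulmx q p r (c : 'M[C]_(q, p)) (X : 'M[C]_(p, r)) :
  (c *m X) *m (c *m X)^t* = c *m (X *m X^t*) *m c^t*.
Proof. by rewrite trmx_mul map_mxM !mulmxA. Qed.

Lemma gram_isometry p q r (X Y : 'M[C]_(p, r)) (e : 'M[C]_(q, r)) :
  X *m X^t* = Y *m Y^t* -> e \is unitarymx -> (e <= Y)%MS ->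
  e *m (pinvmx Y *m X) \is unitarymx.
Proof.
move=> XY /unitarymxP eu eY; apply/unitarymxP.
by rewrite mulmxA gram_mulmx XY -gram_mulmx mulmxKpV.
Qed.

Lemma gram_eq_unitaryP p r (X Y : 'M[C]_(p, r)) : X *m X^t* = Y *m Y^t* <->
  exists2 V : 'M[C]_r, V \is unitarymx & X = Y *m V.
Proof.
split=> [XY|[V Vu ->]]; last by rewrite trmx_mul map_mxM mulmxA mulmxtVK.
set e := schmidt (row_base Y); set bY := schmidt (row_base Y^!%MS).
have eu : e \is unitarymx by apply: schmidt_unitarymx; rewrite rank_leq_col.
have eY : (e :=: Y)%MS.
  by apply: eqmx_trans (eqmx_schmidt_free (row_base_free Y)) (eq_row_base Y).
have YbY : Y *m bY^t* = 0.
  apply/orthomx1P; rewrite orthomx_sym.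
  by rewrite eqmx_schmidt_free ?row_base_free // eq_row_base.
set f := e *m (pinvmx Y *m X).
have [bX bXu bXX] :
    exists2 b : 'M_(\rank Y^!, r), b \is unitarymx & (b <= X^!)%MS.
  by apply: orthonormal_basis; rewrite !rank_ortho (gram_rank XY).
have fX : (f <= X)%MS by rewrite /f mulmxA submxMl.
have fbX : f *m bX^t* = 0.
  by apply/orthomx1P/(submx_trans fX); rewrite orthomx_sym.
exists ((schmidt_complete Y)^t* *m col_mx f bX).
  apply: mul_unitarymx.
    exact: unitarymx_trC (schmidt_complete_unitarymx Y) (add_rank_ortho Y).
  by apply: col_mx_unitary; rewrite ?gram_isometry ?eY.
rewrite mulmxA tr_col_mx map_row_mx mul_mx_row YbY mul_row_col mul0mx addr0.
by rewrite mulmxA unitarymx_proj ?eY // gram_pinv_factor.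
Qed.

End GramUnitary.

Section KrausMaps.
Variable C : numClosedFieldType.
Variables m n s : nat.
Implicit Types E F : 'I_s -> 'M[C]_(n, m).

Definition kraus_map E (X : 'M[C]_m) : 'M[C]_n :=
  \sum_(a < s) E a *m X *m adjmx (E a).

Definition mxvec_fam E : 'M[C]_(n * m, s) := \matrix_(x, a) mxvec (E a) 0 x.

Lemma gram_mxvec_fam E i j p q :
  (mxvec_fam E *m (mxvec_fam E)^t*) (mxvec_index i p) (mxvec_index j q) =
  \sum_a E a i p * (E a j q)^*.
Proof. by rewrite mxE; apply: eq_bigr => a _ /=; rewrite !mxE !mxvecE. Qed.

Lemma kraus_mapE E X i j :
  kraus_map E X i j =
  \sum_p \sum_q X p q * \sum_a E a i p * (E a j q)^*.
Proof.
rewrite summxE.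
transitivity (\sum_a \sum_p \sum_q E a i p * X p q * (E a j q)^*).
  apply eq_bigr => a _; rewrite mxE exchange_big; apply eq_bigr => q _.
  by rewrite !mxE big_distrl.
rewrite exchange_big; apply eq_bigr => p _.
rewrite exchange_big; apply eq_bigr => q _.
by rewrite big_distrr; apply eq_bigr => a _ /=; rewrite mulrA [X p q * _]mulrC.
Qed.

Lemma kraus_map_delta E i j p q :
  kraus_map E (delta_mx p q) i j = \sum_a E a i p * (E a j q)^*.
Proof.
rewrite kraus_mapE (bigD1 p) //= [X in _ + X]big1 => [|p' np]; last first.
  by rewrite big1 // => q' _; rewrite mxE (negbTE np) mul0r.
rewrite addr0 (bigD1 q) //= [X in _ + X]big1 => [|q' nq]; last first.
  by rewrite mxE (negbTE nq) andbF mul0r.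
by rewrite mxE !eqxx mul1r addr0.
Qed.

Lemma kraus_map_eq_gram E F :
  kraus_map E =1 kraus_map F <->
  mxvec_fam E *m (mxvec_fam E)^t* = mxvec_fam F *m (mxvec_fam F)^t*.
Proof.
split=> [EF | EF X].
  apply/matrixP => x y.
  case/mxvec_indexP: x => i p; case/mxvec_indexP: y => j q.
  by rewrite !gram_mxvec_fam -!kraus_map_delta EF.
apply/matrixP => i j; rewrite !kraus_mapE.
apply eq_bigr => p _; apply eq_bigr => q _.
by rewrite -!gram_mxvec_fam EF.
Qed.

Lemma mxvec_fam_mix E F (U : 'M[C]_s) :
  (forall a, E a = \sum_b U a b *: F b) <-> mxvec_fam E = mxvec_fam F *m U^T.
Proof.
split=> [EU | EU a].
  apply/matrixP => x a; case/mxvec_indexP: x => i p.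
  rewrite !mxE mxvecE EU summxE; apply eq_bigr => b _.
  by rewrite !mxE mxvecE mulrC.
apply/matrixP => i p.
have := congr1 (fun M : 'M_(n * m, s) => M (mxvec_index i p) a) EU.
rewrite !mxE mxvecE => ->.
by rewrite summxE; apply eq_bigr => b _; rewrite !mxE mxvecE mulrC.
Qed.

Theorem kraus_map_unitary_freedom E F :
  kraus_map E =1 kraus_map F <->
  exists U : 'M[C]_s, unitary_mx U /\ forall a, E a = \sum_b U a b *: F b.
Proof.
rewrite kraus_map_eq_gram gram_eq_unitaryP.
split=> [[V Vu EV] | [U [/unitary_mxP Uu EU]]].
  exists V^T; split; first by apply/unitary_mxP; rewrite trmx_unitary.
  by apply/mxvec_fam_mix; rewrite trmxK.
by exists U^T; rewrite ?trmx_unitary // -mxvec_fam_mix.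
Qed.

End KrausMaps.

Section JoinFamilies.
Variables (T : Type) (p q : nat).

Definition join_fam (f : 'I_p -> T) (g : 'I_q -> T) (a : 'I_(p + q)) : T :=
  match split a with inl k => f k | inr l => g l end.

Variables (f : 'I_p -> T) (g : 'I_q -> T).

Lemma join_fam_lshift k : join_fam f g (lshift q k) = f k.
Proof. by rewrite /join_fam (unsplitK (inl _ k)). Qed.

Lemma join_fam_rshift l : join_fam f g (rshift p l) = g l.
Proof. by rewrite /join_fam (unsplitK (inr _ l)). Qed.

Lemma big_join_fam (V : nmodType) (h : 'I_(p + q) -> T -> V) :
  \sum_a h a (join_fam f g a) =
  \sum_k h (lshift q k) (f k) + \sum_l h (rshift p l) (g l).
Proof.
rewrite big_split_ord; congr (_ + _); apply: eq_bigr => k _.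
  by rewrite join_fam_lshift.
by rewrite join_fam_rshift.
Qed.

End JoinFamilies.

Lemma join_fam_mix (R : pzRingType) (V : lmodType R) p q p' q'
    (A : 'I_p -> V) (D : 'I_q -> V) (G : 'I_p' -> V) (H : 'I_q' -> V)
    (U : 'M[R]_(p + q, p' + q')) :
  (forall a, join_fam A D a = \sum_b U a b *: join_fam G H b) <->
  (forall k, A k = \sum_i U (lshift q k) (lshift q' i) *: G i
                   + \sum_j U (lshift q k) (rshift p' j) *: H j) /\
  (forall l, D l = \sum_i U (rshift p l) (lshift q' i) *: G i
                   + \sum_j U (rshift p l) (rshift p' j) *: H j).
Proof.
have mixE a : \sum_b U a b *: join_fam G H b =
    \sum_i U a (lshift q' i) *: G i + \sum_j U a (rshift p' j) *: H j.
  exact: (big_join_fam _ _ (fun b x => U a b *: x)).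
split=> [EU | [AU DU] a].
  by split=> [k|l]; rewrite -mixE -EU ?join_fam_lshift ?join_fam_rshift.
by case: (split_ordP a) => [k|l] ->;
  rewrite mixE ?join_fam_lshift ?join_fam_rshift ?AU ?DU.
Qed.

Lemma kraus_map_join (C : numClosedFieldType) m n p q
    (E : 'I_p -> 'M[C]_(n, m)) (F : 'I_q -> 'M[C]_(n, m)) X :
  kraus_map (join_fam E F) X = kraus_map E X + kraus_map F X.
Proof. exact: (big_join_fam _ _ (fun _ M => M *m X *m adjmx M)). Qed.

Lemma subr_eq_subr (V : zmodType) (a b c d : V) :
  a - b = c - d <-> a + d = c + b.
Proof.
split=> abcd; first by rewrite -(subrK b a) abcd addrAC subrK.
by rewrite -(addrK d a) abcd addrAC addrK.
Qed.

Theorem mainTheorem11 (R : realType) (m n N : nat)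
  (Psi Xi : 'M[R[i]]_m -> 'M[R[i]]_n)
  (A B C D : 'I_N -> 'M[R[i]]_(n, m)) :
  linear Psi -> linear Xi ->
  hermitian_preserving Psi -> hermitian_preserving Xi ->
  trace_preserving Psi -> trace_preserving Xi ->
  (forall X : 'M[R[i]]_m,
     Psi X = \sum_(k < N) A k *m X *m adjmx (A k)
             - \sum_(j < N) B j *m X *m adjmx (B j)) ->
  (forall X : 'M[R[i]]_m,
     Xi X = \sum_(i < N) C i *m X *m adjmx (C i)
            - \sum_(l < N) D l *m X *m adjmx (D l)) ->
  (Psi = Xi <->
   exists U : 'M[R[i]]_(N + N),
     unitary_mx U /\
     (forall k : 'I_N,
        A k = \sum_(i < N) U (lshift N k) (lshift N i) *: C i
              + \sum_(j < N) U (lshift N k) (rshift N j) *: B j) /\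
     (forall l : 'I_N,
        D l = \sum_(i < N) U (rshift N l) (lshift N i) *: C i
              + \sum_(j < N) U (rshift N l) (rshift N j) *: B j)).
Proof.
move=> _ _ _ _ _ _ Psi_def Xi_def.
have eq_at X : Psi X = Xi X <->
    kraus_map (join_fam A D) X = kraus_map (join_fam C B) X.
  rewrite Psi_def Xi_def !kraus_map_join; exact: subr_eq_subr.
have -> : Psi = Xi <-> kraus_map (join_fam A D) =1 kraus_map (join_fam C B).
  split=> [PX X | ADCB]; first by apply/eq_at; rewrite PX.
  by apply: boolp.funext => X; apply/eq_at.
rewrite kraus_map_unitary_freedom.
by split=> [[U [Uu /join_fam_mix EU]] | [U [Uu /join_fam_mix EU]]]; exists U.
Qed.
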